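(* Let $n\in\mathbb{N}$, $n\geq 2$, let $l\in(0,\frac{2}{n})$ and let $\alpha$ satisfy $\frac{2}{n}\leq\alpha<1+\frac{1}{n}-\frac{l}{2}$. Then there exist $\theta$ with $1<\theta<\frac{n}{n-2}$ and $\mu>\frac{n}{2}$ such that $$\frac{l(2\mu-1)}{4\mu-n}<\frac{n(\theta+1-2\alpha\theta)+2\theta}{2n\theta+n^2-n^2\theta}.$$
   Context: For $n=2$ the condition $1<\theta<\frac{n}{n-2}$ is understood as $\theta>1$. *)

From Stdlib Require Import Reals.
Open Scope R_scope.

(* The condition 1 < theta < n/(n-2), where for n = 2 the upper bound is
   void (convention from the paper). *)
Definition theta_admissible (n : nat) (theta : R) : Prop :=
  1 < theta /\ ((n = 2%nat) \/ theta < INR n / (INR n - 2)).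

(* Let d := 1 + 1/n - alpha - l/2 > 0 be the slack in the hypothesis on alpha.
   As mu grows the left-hand side tends to l/2, while at theta = 1 the
   right-hand side equals l/2 + d.  The midpoint (l + d)/2 separates the two
   sides for mu = n (l + d)/d and theta = 1 + d/n; this theta lies below
   n/(n-2) because d < 1. *)

From Stdlib Require Import Reals Lra Psatz.
From Coquelicot Require Import Rcomplements.
Open Scope R_scope.

Lemma lhs_lt_half_add (l d N mu : R) :
  0 <= l -> N < 4 * mu -> (l + d) * N < 4 * d * mu ->
  l * (2 * mu - 1) / (4 * mu - N) < (l + d) / 2.
Proof.
  intros Hl HN Hmu.
  apply Rlt_div_l; lra.
Qed.

Lemma half_add_lt_rhs (N l d alpha eps : R) :
  2 <= N -> 0 <= l -> 0 < eps < d -> (N - 2) * eps < 2 ->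
  alpha = 1 + 1 / N - l / 2 - d ->
  (l + d) / 2 <
  (N * (1 + eps + 1 - 2 * alpha * (1 + eps)) + 2 * (1 + eps)) /
  (2 * N * (1 + eps) + N ^ 2 - N ^ 2 * (1 + eps)).
Proof.
  intros HN Hl [Heps Hepsd] Hden Halpha.
  assert (Hnum : N * (1 + eps + 1 - 2 * alpha * (1 + eps)) + 2 * (1 + eps)
                 = N * (l + 2 * d + eps * (l + 2 * d - 1))).
  { subst alpha. field. lra. }
  rewrite Hnum.
  replace (2 * N * (1 + eps) + N ^ 2 - N ^ 2 * (1 + eps))
    with (N * (2 - (N - 2) * eps)) by ring.
  apply (Rlt_div_r _ _ (N * (2 - (N - 2) * eps))); [nra |].
  replace ((l + d) / 2 * (N * (2 - (N - 2) * eps)))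
    with (N * ((l + d) / 2 * (2 - (N - 2) * eps))) by field.
  apply Rmult_lt_compat_l; [lra |].
  (* After expanding, the difference of the two sides is at least d - eps. *)
  assert (0 <= (l + d) * (N - 2) * eps) by (apply Rmult_le_pos; nra).
  nra.
Qed.

Lemma theta_admissible_one_add (n : nat) (eps : R) :
  (2 <= n)%nat -> 0 < eps -> (INR n - 2) * eps < 2 ->
  theta_admissible n (1 + eps).
Proof.
  intros Hn Heps Hbound.
  split; [lra |].
  destruct (Nat.eq_dec n 2) as [-> | Hn2]; [now left | right].
  assert (HN : 3 <= INR n) by (replace 3 with (INR 3) by (simpl; lra); apply le_INR; lia).
  apply Rlt_div_r; lra.
Qed.

Theorem lemma4p4 (n : nat) (l alpha : R) :
  (2 <= n)%nat ->
  0 < l -> l < 2 / INR n ->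
  2 / INR n <= alpha -> alpha < 1 + 1 / INR n - l / 2 ->
  exists theta mu : R,
    theta_admissible n theta /\ INR n / 2 < mu /\
    l * (2 * mu - 1) / (4 * mu - INR n) <
    (INR n * (theta + 1 - 2 * alpha * theta) + 2 * theta) /
    (2 * INR n * theta + INR n ^ 2 - INR n ^ 2 * theta).
Proof.
  intros Hn Hl _ Halpha_lo Halpha_hi.
  assert (HN : 2 <= INR n) by (replace 2 with (INR 2) by (simpl; lra); apply le_INR; lia).
  set (N := INR n) in *.
  set (d := 1 + 1 / N - alpha - l / 2).
  assert (Hd : 0 < d) by (unfold d; lra).
  assert (Hd1 : d < 1).
  { unfold d. assert (2 / N = 2 * (1 / N)) by (field; lra).
    assert (0 < 1 / N) by (apply Rdiv_lt_0_compat; lra). lra. }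
  set (eps := d / N).
  assert (Heps : eps * N = d) by (unfold eps; field; lra).
  assert (Heps_pos : 0 < eps) by (apply Rdiv_lt_0_compat; lra).
  assert (Heps_lt_d : eps < d) by nra.
  assert (Heps_bound : (N - 2) * eps < 2) by nra.
  set (mu := N * (l + d) / d).
  assert (Hmu : d * mu = N * (l + d)) by (unfold mu; field; lra).
  exists (1 + eps), mu.
  split; [| split].
  - now apply theta_admissible_one_add.
  - nra.
  - apply Rlt_trans with ((l + d) / 2).
    + apply lhs_lt_half_add; nra.
    + apply half_add_lt_rhs with (d := d); try lra.
      unfold d; ring.
Qed.
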